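(* Let $Q$ be a sequence, $G=(V,E,\delta)$ a pangenome graph, and $H$ the associated directed graph defined in the context. If $v_{(i_0,u_0,f_0)},v_{(i_1,u_1,f_1)},\dots,v_{(i_k,u_k,f_k)}$ is a directed path in $H$, then $Q_{i_0}Q_{i_1}\cdots Q_{i_k}$ is a common subsequence between $Q$ and $G$.
   Context: Strings are 0-indexed; $S_i$ is the character of $S$ at position $i$. A pangenome graph is a triple $G=(V,E,\delta)$ where $(V,E)$ is a finite directed graph and $\delta:V\to\Sigma^*\setminus\{\epsilon\}$ assigns to each vertex a nonempty string over an alphabet $\Sigma$. A path in $G$ is a sequence of vertices $P=w_0,\dots,w_k$ ($k\ge0$) with $(w_j,w_{j+1})\in E$ for $j<k$; $spell(P)=\delta(w_0)\cdots\delta(w_k)$. A sequence $S$ is a common subsequence between $Q$ and $G$ if there is a path $P$ in $G$ such that $S$ is a subsequence of both $Q$ and $spell(P)$. The directed graph $H$ has vertex set $\{v_{(i,u,f)}: 0\le i\le|Q|-1,\ u\in V,\ 0\le f\le|\delta(u)|-1,\ Q_i=\delta(u)_f\}$, and an edge from $v_{(i,u,f)}$ to $v_{(i',u',f')}$ if and only if $i<i'$ and either ($u\ne u'$ and there is a path from $u$ to $u'$ in $G$) or ($u=u'$ and $f<f'$). *)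

From mathcomp Require Import all_boot.
Set Implicit Arguments. Unset Strict Implicit. Unset Printing Implicit Defensive.

(* A pangenome graph G = (V, E, delta): V finite vertex type, E : rel V the
   directed edge relation, delta : V -> seq Sigma labelling every vertex by a
   nonempty string (the nonemptiness is a hypothesis of the theorem). *)

Definition is_gpath (V : finType) (E : rel V) (p : seq V) : bool :=
  match p with [::] => false | w0 :: ws => path E w0 ws end.

Definition spell (V : finType) (Sigma : eqType) (delta : V -> seq Sigma)
  (p : seq V) : seq Sigma := flatten (map delta p).

Definition gpath_from_to (V : finType) (E : rel V) (u u' : V) : Prop :=
  exists p : seq V, [/\ is_gpath E p, head u' p = u & last u p = u'].

Definition common_subseq (V : finType) (Sigma : eqType) (E : rel V)
  (delta : V -> seq Sigma) (Q S : seq Sigma) : Prop :=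
  exists p : seq V, is_gpath E p /\ subseq S Q /\ subseq S (spell delta p).

Definition hvertex (V : finType) (Sigma : eqType) (delta : V -> seq Sigma)
  (Q : seq Sigma) (x : nat * V * nat) : Prop :=
  let: (i, u, f) := x in
  [/\ i < size Q, f < size (delta u) & exists d : Sigma, nth d Q i = nth d (delta u) f].

Definition hedge (V : finType) (E : rel V) (x y : nat * V * nat) : Prop :=
  let: (i, u, f) := x in let: (i', u', f') := y in
  i < i' /\ ((u <> u' /\ gpath_from_to E u u') \/ (u = u' /\ f < f')).

Fixpoint hpath_rec (V : finType) (Sigma : eqType) (E : rel V)
  (delta : V -> seq Sigma) (Q : seq Sigma) (x : nat * V * nat)
  (xs : seq (nat * V * nat)) : Prop :=
  match xs with
  | [::] => True
  | y :: ys => hedge E x y /\ hvertex delta Q y /\ hpath_rec E delta Q y ys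
  end.

Definition is_hpath (V : finType) (Sigma : eqType) (E : rel V)
  (delta : V -> seq Sigma) (Q : seq Sigma) (p : seq (nat * V * nat)) : Prop :=
  match p with
  | [::] => False
  | x :: xs => hvertex delta Q x /\ hpath_rec E delta Q x xs
  end.

From mathcomp Require Import all_boot.

Set Implicit Arguments.
Unset Strict Implicit.
Unset Printing Implicit Defensive.

(* Along a path of H the indices i_0 < i_1 < ... increase strictly, so the
   letters Q_{i_j} form a subsequence of Q.  On the graph side, each edge of H
   either stays in the same node of G at a later offset, or jumps to a distinct
   node reachable in G; gluing the witnessing paths of G gives one path whose
   spelling, read from offset f_0 of u_0, contains the letters
   delta(u_j)_{f_j} = Q_{i_j} in order. *)

Lemma subseq_drop_drop (T : eqType) (s : seq T) m n :
  m <= n -> subseq (drop n s) (drop m s).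
Proof. by move=> le_mn; rewrite -(subnK le_mn) -drop_drop drop_subseq. Qed.

Lemma subseq_drop_cat (T : eqType) (s1 s2 : seq T) n :
  n <= size s1 -> subseq s2 (drop n (s1 ++ s2)).
Proof.
rewrite leq_eqVlt => /predU1P[->|lt_n]; first by rewrite drop_size_cat.
by rewrite drop_cat lt_n suffix_subseq.
Qed.

Section CommonSubsequence.
Variables (Sigma : eqType) (V : finType) (E : rel V).
Variables (delta : V -> seq Sigma) (Q : seq Sigma) (s0 : Sigma).

Lemma gpath_from_toP u u' :
  gpath_from_to E u u' -> exists2 ws, path E u ws & last u ws = u'.
Proof. by case=> -[|w ws] [//= pth <- <-]; exists ws. Qed.

Lemma hvertexP i u f : hvertex delta Q (i, u, f) ->
  [/\ i < size Q, f < size (delta u) & nth s0 Q i = nth s0 (delta u) f].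
Proof.
case=> lt_i lt_f [d eq_d]; split=> //.
by rewrite (set_nth_default d) // eq_d (set_nth_default s0).
Qed.

Lemma hpath_subseq_drop x xs :
  hvertex delta Q x -> hpath_rec E delta Q x xs ->
  subseq [seq nth s0 Q y.1.1 | y <- x :: xs] (drop x.1.1 Q).
Proof.
elim: xs x => [|y ys IHys] [[i u] f] /hvertexP[lt_i _ _] /=.
  by rewrite (drop_nth s0 lt_i) /= eqxx sub0seq.
case: y => [[i' u'] f'] [[lt_ii' _] [Hy Hys]].
rewrite (drop_nth s0 lt_i) /= eqxx.
by apply: subseq_trans (IHys _ Hy Hys) _; apply: subseq_drop_drop.
Qed.

Definition spelled_from u f (S : seq Sigma) : Prop :=
  exists2 ws, path E u ws & subseq S (drop f (spell delta (u :: ws))).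

Lemma spelled_from_le u f f' S :
  f <= f' -> spelled_from u f' S -> spelled_from u f S.
Proof.
move=> le_ff' [ws pth sub]; exists ws => //.
by apply: subseq_trans sub _; apply: subseq_drop_drop.
Qed.

Lemma spelled_from_cons u f S : f < size (delta u) ->
  spelled_from u f.+1 S -> spelled_from u f (nth s0 (delta u) f :: S).
Proof.
move=> lt_f [ws pth sub]; exists ws => //.
have lt_f_spell : f < size (spell delta (u :: ws)).
  by rewrite /spell /= size_cat ltn_addr.
by rewrite (drop_nth s0 lt_f_spell) /spell /= nth_cat lt_f /= eqxx.
Qed.

Lemma spelled_from_gpath u u' f S : u <> u' -> gpath_from_to E u u' ->
  f <= size (delta u) -> spelled_from u' 0 S -> spelled_from u f S.
Proof.
move=> neq_uu' /gpath_from_toP[ws pth_ws last_ws] le_f [vs pth_vs sub].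
exists (ws ++ vs); first by rewrite cat_path pth_ws last_ws.
apply: subseq_trans sub _; rewrite drop0.
case/lastP: ws last_ws {pth_ws} => [/neq_uu'//|ws w]; rewrite last_rcons => ->.
rewrite /spell cat_rcons /= map_cat flatten_cat /= catA.
by apply: subseq_drop_cat; rewrite size_cat (leq_trans le_f) ?leq_addr.
Qed.

Lemma spelled_from_hedge i u f i' u' f' S :
  hedge E (i, u, f) (i', u', f') -> f < size (delta u) ->
  spelled_from u' f' S -> spelled_from u f.+1 S.
Proof.
move=> [_ [[neq_uu' reach]|[<- lt_ff']]] lt_f Hspell.
  exact: spelled_from_gpath neq_uu' reach lt_f (spelled_from_le _ Hspell).
exact: spelled_from_le lt_ff' Hspell.
Qed.

Lemma hpath_spelled_from x xs :
  hvertex delta Q x -> hpath_rec E delta Q x xs ->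
  spelled_from x.1.2 x.2 [seq nth s0 Q y.1.1 | y <- x :: xs].
Proof.
elim: xs x => [|y ys IHys] [[i u] f] /hvertexP[_ lt_f eq_nth] /=; rewrite eq_nth.
  by move=> _; apply: spelled_from_cons => //; exists [::]; rewrite ?sub0seq.
case: y => [[i' u'] f'] [Hedge [Hy Hys]].
apply: spelled_from_cons => //.
exact: spelled_from_hedge Hedge lt_f (IHys _ Hy Hys).
Qed.

End CommonSubsequence.

Theorem lemma3 (Sigma : eqType) (V : finType) (E : rel V)
  (delta : V -> seq Sigma) (Q : seq Sigma) (s0 : Sigma)
  (hdelta : forall u : V, delta u != [::])
  (p : seq (nat * V * nat)) :
  is_hpath E delta Q p ->
  common_subseq E delta Q [seq nth s0 Q x.1.1 | x <- p].
Proof.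
case: p => [//|x xs] [Hx Hxs].
have [ws pth subG] := hpath_spelled_from s0 Hx Hxs.
exists (x.1.2 :: ws); split=> //; split.
  exact: subseq_trans (hpath_subseq_drop s0 Hx Hxs) (drop_subseq _ _).
exact: subseq_trans subG (drop_subseq _ _).
Qed.
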